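(* Let $\{X_i\mid i\in I\}$ be a family of $T_0$-spaces. If the product space $\prod_{i\in I}X_i$ is a $d^{\ast}$-space, then each $X_i$ is a $d^{\ast}$-space.
   Context: All spaces are $T_0$. The specialization order of a space $X$ is given by $x\le y$ iff $x\in cl(\{y\})$; ${\uparrow}$ is taken with respect to it. A $T_0$-space $X$ is a $d^{\ast}$-space if for every directed $D\subseteq X$ (in the specialization order), every $x\in X$ and every nonempty open $U\subseteq X$, $\bigcap_{d\in D}{\uparrow}d\cap{\uparrow}x\subseteq U$ implies ${\uparrow}d\cap{\uparrow}x\subseteq U$ for some $d\in D$. *)

From HB Require Import structures.
From mathcomp Require Import all_boot all_order all_algebra.
From mathcomp Require Import all_classical all_reals all_analysis.
Set Implicit Arguments. Unset Strict Implicit. Unset Printing Implicit Defensive.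
Local Open Scope classical_set_scope.

Definition spec_le (T : topologicalType) (x y : T) : Prop := closure [set y] x.

Definition upset (T : topologicalType) (x : T) : set T := [set y | spec_le x y].

Definition spec_directed (T : topologicalType) (D : set T) : Prop :=
  D !=set0 /\
  forall a b, D a -> D b -> exists2 c, D c & spec_le a c /\ spec_le b c.

Definition d_star_space (T : topologicalType) : Prop :=
  forall (D : set T), spec_directed D ->
  forall (x : T) (U : set T), open U -> U !=set0 ->
    (\bigcap_(d in D) upset d) `&` upset x `<=` U ->
    exists2 d, D d & upset d `&` upset x `<=` U.

From HB Require Import structures.
From mathcomp Require Import all_boot all_order all_algebra.
From mathcomp Require Import all_classical all_reals all_analysis.
Local Open Scope classical_set_scope.

(* Being a d*-space passes to retracts, since continuous maps preserve the
   specialization order; a factor of a product with inhabited factors is a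
   retract of the product, via the projection and the insertion of a
   coordinate into a fixed point. *)

Lemma spec_le_continuous (S T : topologicalType) (f : S -> T) (x y : S) :
  continuous f -> spec_le x y -> spec_le (f x) (f y).
Proof.
move=> cf xy B fxB; have [_ [/= -> yB]] := xy (f @^-1` B) (cf x B fxB).
by exists (f y).
Qed.

Lemma d_star_space_retract (S T : topologicalType) (e : S -> T) (r : T -> S) :
  continuous e -> continuous r -> cancel e r ->
  d_star_space T -> d_star_space S.
Proof.
move=> ce cr eK dT D [[d0 Dd0] Ddir] x U oU [u Uu] DxU.
have eD : spec_directed (e @` D).
  split; first by exists (e d0), d0.
  move=> _ _ [p Dp <-] [q Dq <-]; have [c Dc [pc qc]] := Ddir p q Dp Dq.
  by exists (e c); [exists c | split; exact: spec_le_continuous].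
have oV : open (r @^-1` U) by exact: open_comp (fun t _ => cr t) oU.
have V0 : r @^-1` U !=set0 by exists (e u); rewrite /= eK.
have eDxV : \bigcap_(d in e @` D) upset d `&` upset (e x) `<=` r @^-1` U.
  move=> t [Dt xt]; apply: DxU; split; last first.
    by rewrite -(eK x); exact: spec_le_continuous.
  by move=> d Dd; rewrite -(eK d); apply: spec_le_continuous => //; apply: Dt; exists d.
have [_ [d Dd <-] edxV] := dT _ eD (e x) _ oV V0 eDxV.
exists d => // y [dy xy]; rewrite -(eK y).
by apply: edxV; split; exact: spec_le_continuous.
Qed.

Theorem mainTheorem3 (I : Type) (X : I -> topologicalType) :
  (forall i, kolmogorov_space (X i)) ->
  (forall i, inhabited (X i)) ->
  d_star_space (prod_topology X) ->
  forall i, d_star_space (X i).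
Proof.
move=> _ inhX dP i.
pose J : eqType := {classic I}. (* [dfwith] needs decidable equality on the index type *)
pose K : J -> topologicalType := X.
have ptK j : exists x : K j, True by case: (inhX j) => x; exists x.
pose a : prod_topology K := fun j => projT1 (cid (ptK j)).
apply: (@d_star_space_retract (K i) (prod_topology K) (dfwith a i) (proj i)) => //.
- exact: dfwith_continuous.
- exact: proj_continuous.
- exact: projK.
Qed.
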